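(* For any integer $n\ge3$, with $P_n$ the path of order $n$, $$\gamma_{(2,2,2)}(P_n)=2\gamma_t(P_n)=\begin{cases} n & \text{if } n\equiv 0\pmod 4,\\ n+1 & \text{if } n\equiv 1,3\pmod 4,\\ n+2 & \text{if } n\equiv 2\pmod 4.\end{cases}$$
   Context: $N(v)$ is the open neighbourhood. $\gamma_{(2,2,2)}(G)$ is the minimum of $\sum_v f(v)$ over functions $f:V(G)\to\{0,1,2\}$ with $\sum_{u\in N(v)}f(u)\ge2$ for every vertex $v$. $\gamma_t(G)$ is the total domination number (minimum size of $S$ such that every vertex has a neighbour in $S$). *)

From mathcomp Require Import all_boot all_order.
Set Implicit Arguments. Unset Strict Implicit. Unset Printing Implicit Defensive.

(* A (simple) graph on a finite vertex type T is given by its adjacency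
   relation adj; the open neighbourhood of v is [set u | adj v u]. *)

Definition path_adj (n : nat) : rel 'I_n :=
  fun i j => (i.+1 == j :> nat) || (j.+1 == i :> nat).

Definition is_222_fun (T : finType) (adj : rel T) (f : {ffun T -> 'I_3}) : bool :=
  [forall v, 2 <= \sum_(u | adj v u) (f u : nat)].

Definition weight (T : finType) (f : {ffun T -> 'I_3}) : nat :=
  \sum_v (f v : nat).

(* gamma_{(2,2,2)}: minimum weight of a (2,2,2)-domination function.
   (Default value 2*#|T| if none exists; irrelevant for paths with n >= 3,
   where the constant function 2 is valid... in fact for any graph without
   isolated vertices.) *)
Definition gamma222 (T : finType) (adj : rel T) : nat :=
  \big[minn/(2 * #|T|)]_(f : {ffun T -> 'I_3} | is_222_fun adj f) weight f.

Definition is_total_dom (T : finType) (adj : rel T) (S : {set T}) : bool :=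
  [forall v, [exists u in S, adj v u]].

Definition gamma_t (T : finType) (adj : rel T) : nat :=
  \big[minn/#|T|]_(S : {set T} | is_total_dom adj S) #|S|.

(** The vertices [i] with [i mod 4 ∈ {0,1}] form an open packing of
    [P_n] (no vertex has two neighbours among them), so summing the
    (2,2,2)-condition over them counts every vertex weight at most once and
    gives twice their number as a lower bound on [γ_(2,2,2)(P_n)].  The
    vertices with [i mod 4 ∈ {1,2}], together with [n-2], form a total
    dominating set of exactly half that size, and doubling the indicator of
    a total dominating set gives a (2,2,2)-function, which closes the gap
    for both parameters at once. *)
From mathcomp Require Import all_boot all_order zify.

Set Implicit Arguments.
Unset Strict Implicit.
Unset Printing Implicit Defensive.

Lemma bigmin_le (I : eqType) (r : seq I) (P : pred I) (F : I -> nat) d x :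
  x \in r -> P x -> \big[minn/d]_(y <- r | P y) F y <= F x.
Proof.
elim: r => // y r IHr; rewrite inE big_cons => /predU1P[<- -> | xr Px].
  exact: geq_minl.
by case: (P y); rewrite ?geq_min IHr ?orbT.
Qed.

Lemma le_bigmin (I : Type) (r : seq I) (P : pred I) (F : I -> nat) d k :
  k <= d -> (forall x, P x -> k <= F x) -> k <= \big[minn/d]_(x <- r | P x) F x.
Proof. by move=> kd kF; elim/big_ind: _ => // a b; rewrite leq_min => -> ->. Qed.

Section Domination.

Variables (T : finType) (adj : rel T).

Definition indicator2 (S : {set T}) : {ffun T -> 'I_3} :=
  [ffun u => if u \in S then ord_max else ord0].

Lemma weight_indicator2 S : weight (indicator2 S) = 2 * #|S|.
Proof.
rewrite /weight -sum1_card big_distrr /= [RHS]big_mkcond /=.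
by apply: eq_bigr => u _; rewrite ffunE; case: (u \in S).
Qed.

Lemma total_dom_222 S : is_total_dom adj S -> is_222_fun adj (indicator2 S).
Proof.
move=> /forallP domS; apply/forallP => v.
have /existsP[u /andP[uS vu]] := domS v.
by rewrite (bigD1 u) //= ffunE uS leq_addr.
Qed.

Lemma open_packing_weight (D : {set T}) (f : {ffun T -> 'I_3}) :
  (forall u, #|[set v in D | adj v u]| <= 1) -> is_222_fun adj f ->
  2 * #|D| <= weight f.
Proof.
move=> packD /forallP f222.
rewrite mulnC -sum_nat_const /weight.
apply: (@leq_trans (\sum_(v in D) \sum_(u | adj v u) (f u : nat))).
  by apply: leq_sum => v _; apply: f222.
rewrite (exchange_big_dep xpredT) //=; apply: leq_sum => u _.
by rewrite sum_nat_cond_const -[leqRHS]mul1n leq_mul2r packD orbT.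
Qed.

Lemma gamma222_2gamma_t_eq (k : nat) (S : {set T}) :
  (forall f, is_222_fun adj f -> k <= weight f) ->
  is_total_dom adj S -> 2 * #|S| <= k ->
  gamma222 adj = k /\ 2 * gamma_t adj = k.
Proof.
move=> lower domS Sk.
have low2 S' : is_total_dom adj S' -> k <= 2 * #|S'|.
  by move=> domS'; rewrite -weight_indicator2 lower ?total_dom_222.
have kT : k <= 2 * #|T| by rewrite (leq_trans (low2 S domS)) ?leq_mul2l ?max_card.
rewrite /gamma222 /gamma_t; split; apply/eqP; rewrite eqn_leq; apply/andP; split.
- rewrite (leq_trans _ Sk) // -weight_indicator2.
  exact: bigmin_le (mem_index_enum _) (total_dom_222 domS).
- exact: le_bigmin.
- by rewrite (leq_trans _ Sk) // leq_mul2l bigmin_le ?mem_index_enum.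
- elim/big_ind: _ => [// | a b ka kb | S' /low2 //].
  by rewrite minnMr leq_min ka kb.
Qed.

End Domination.

Definition res01 (i : nat) : bool := i %% 4 < 2.
Definition res12 (i : nat) : bool := (i %% 4 == 1) || (i %% 4 == 2).

Definition path_bound (n : nat) : nat :=
  if n %% 4 == 0 then n else if n %% 4 == 2 then n + 2 else n + 1.

Lemma path_boundS n : path_bound n.+1 = path_bound n + 2 * res01 n.
Proof.
by rewrite /path_bound /res01; case: ifP; repeat case: eqP => ?; lia.
Qed.

Lemma card_ord_pred n (p : pred nat) :
  #|[set i : 'I_n | p i]| = \sum_(i < n) p i.
Proof. by rewrite -sum1dep_card big_mkcond; apply: eq_bigr => i _; case: (p i). Qed.

Lemma double_sum_res01 n : 2 * \sum_(i < n) res01 i = path_bound n.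
Proof.
elim: n => [|n IHn]; first by rewrite big_ord0.
by rewrite big_ord_recr /= mulnDr IHn path_boundS.
Qed.

Lemma res12S i : res12 i.+1 = res01 i.
Proof. by rewrite /res12 /res01; apply/idP/idP; lia. Qed.

Lemma sum_res12 n : \sum_(i < n) res12 i + res12 n = \sum_(i < n) res01 i.
Proof.
have -> : \sum_(i < n) res12 i + res12 n = \sum_(i < n.+1) res12 i.
  by rewrite big_ord_recr.
by rewrite big_ord_recl add0n; apply: eq_bigr => i _; rewrite res12S.
Qed.

Section Path.

Variable n : nat.
Local Notation adj := (@path_adj n).

Lemma path_res01_packing (u : 'I_n) :
  #|[set v in [set i : 'I_n | res01 i] | adj v u]| <= 1.
Proof.
apply/card_le1_eqP => v w; rewrite !inE /path_adj /res01.
by move=> vu wu; apply: ord_inj; lia.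
Qed.

Lemma path_222_weight f : is_222_fun adj f -> path_bound n <= weight f.
Proof.
move=> f222; rewrite -double_sum_res01 -card_ord_pred.
exact: open_packing_weight path_res01_packing f222.
Qed.

Definition path_tdom_set : {set 'I_n} := [set i : 'I_n | res12 i || (i.+2 == n)].

Lemma path_tdom_set_total : 1 < n -> is_total_dom adj path_tdom_set.
Proof.
move=> n2; apply/forallP => v; apply/existsP; have vn := ltn_ord v.
have [v01 | v23] := boolP (res01 v); last first.
  exists (Ordinal (leq_ltn_trans (leq_pred v) vn)).
  by rewrite inE /path_adj /res12 /=; move: v23; rewrite /res01; lia.
have [vSn | vlast] := ltnP v.+1 n.
  by exists (Ordinal vSn); rewrite inE /path_adj /res12 /=; move: v01; rewrite /res01; lia.
have n2n : n - 2 < n by lia.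
by exists (Ordinal n2n); rewrite inE /path_adj /res12 /=; move: v01; rewrite /res01; lia.
Qed.

Lemma path_tdom_set_card : 2 * #|path_tdom_set| <= path_bound n.
Proof.
rewrite -double_sum_res01 -sum_res12 -card_ord_pred leq_mul2l /=.
have -> : path_tdom_set = [set i : 'I_n | res12 i] :|: [set i : 'I_n | i.+2 == n].
  by apply/setP => i; rewrite !inE.
have [n12 | n03] := boolP (res12 n).
  rewrite (leq_trans (leq_card_setU _ _)) // leq_add2l.
  by apply/card_le1_eqP => v w; rewrite !inE => /eqP vn /eqP wn; apply: ord_inj; lia.
rewrite addn0 (setUidPl _) //.
by apply/subsetP => i; rewrite !inE; move: n03; rewrite /res12; lia.
Qed.

End Path.

Theorem proposition22 (n : nat) : 3 <= n ->
  gamma222 (@path_adj n) = 2 * gamma_t (@path_adj n) /\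
  2 * gamma_t (@path_adj n) =
    (if n %% 4 == 0 then n
     else if n %% 4 == 2 then n + 2
     else n + 1).
Proof.
move=> n3.
by have [-> ->] := gamma222_2gamma_t_eq (@path_222_weight n)
  (path_tdom_set_total (ltnW n3)) (path_tdom_set_card n).
Qed.
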